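(* Let $n\ge1$, let $q$ be an integer with $0<q\le n$, and let $f\colon\mathbb Z_2^n\to\mathbb Z_2^n$ be a map such that every $\vec y\in\mathbb Z_2^n$ has at most $2^q$ preimages under $f$. Then there is an even permutation $h$ of $\mathbb Z_2^{n+q}$ with at most $2^{n+1}$ non-fixed points such that $\psi_{n+q,n}(h(\phi_{n,n+q}(\vec x)))=f(\vec x)$ for all $\vec x\in\mathbb Z_2^n$; consequently $f$ can be implemented by a reversible circuit of NOT, CNOT and 2-CNOT gates on $n+q$ lines with $q$ additional inputs, i.e. $f\in F(n,q)$.
   Context: For $m\ge1$, a $k$-CNOT gate on $m$ lines with control lines $i_1,\dots,i_k$ and target line $j\notin\{i_1,\dots,i_k\}$ is the map $\mathbb Z_2^m\to\mathbb Z_2^m$ replacing $x_j$ by $x_j\oplus(x_{i_1}\wedge\dots\wedge x_{i_k})$ and leaving other coordinates unchanged; NOT, CNOT, 2-CNOT are the cases $k=0,1,2$. A reversible circuit on $m$ lines is a finite sequence of such gates and computes their composition $g$. With $\phi_{n,n+q}(\langle x_1,\dots,x_n\rangle)=\langle x_1,\dots,x_n,0,\dots,0\rangle$ and $\psi_{n+q,n}(\langle x_1,\dots,x_{n+q}\rangle)=\langle x_1,\dots,x_n\rangle$, such a circuit on $n+q$ lines implements $f\colon\mathbb Z_2^n\to\mathbb Z_2^n$ with $q$ additional inputs if $\psi_{n+q,n}(g(\phi_{n,n+q}(\vec x)))=f(\vec x)$ for all $\vec x$. $F(n,q)$ denotes the set of all maps $\mathbb Z_2^n\to\mathbb Z_2^n$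 implementable in this way. A non-fixed point of a permutation $h$ is a point $\vec x$ with $h(\vec x)\ne\vec x$. *)

From mathcomp Require Import all_boot all_order all_fingroup.
Set Implicit Arguments. Unset Strict Implicit. Unset Printing Implicit Defensive.

(* Z_2^m, encoded as boolean vectors indexed by lines 'I_m (true = 1, xor = (+)). *)
Definition bvec (m : nat) := {ffun 'I_m -> bool}.

Definition phi (n q : nat) (x : bvec n) : bvec (n + q) :=
  [ffun i : 'I_(n + q) => match split i with inl j => x j | inr _ => false end].

Definition psi (n q : nat) (y : bvec (n + q)) : bvec n :=
  [ffun j : 'I_n => y (lshift q j)].

Arguments phi n q x : clear implicits.
Arguments psi n q y : clear implicits.

(* A k-CNOT gate on m lines: a set of control lines (k = its size) and a target line. *)
Definition gate (m : nat) := ({set 'I_m} * 'I_m)%type.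

Definition gate_ok (m : nat) (g : gate m) : Prop := g.2 \notin g.1.

Definition gate_fun (m : nat) (g : gate m) (x : bvec m) : bvec m :=
  [ffun i : 'I_m => if i == g.2 then x i (+) [forall c in g.1, x c] else x i].

Definition circuit_fun (m : nat) (c : seq (gate m)) (x : bvec m) : bvec m :=
  foldl (fun y g => gate_fun g y) x c.

Definition F (n q : nat) (f : bvec n -> bvec n) : Prop :=
  exists c : seq (gate (n + q)),
    (forall g, g \in c -> gate_ok g /\ #|g.1| <= 2) /\
    (forall x : bvec n, psi n q (circuit_fun c (phi n q x)) = f x).
Arguments F n q f : clear implicits.

From mathcomp Require Import all_boot all_order all_fingroup.
From mathcomp Require Import zify.
Set Implicit Arguments. Unset Strict Implicit. Unset Printing Implicit Defensive.

(* Give the points of each fibre of f distinct ancilla labels (there are at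
   most 2^q of them), so that x |-> (f x, label x) is injective, and extend
   phi x |-> (f x, label x) to a permutation of Z_2^(n+q) that moves only
   points of the two images, at most 2^(n+1) of them.  If it is odd, compose
   it with a transposition of two points of the image of phi outside the
   second image, or else of two points with the same first n coordinates.
   Even permutations of Z_2^m, m >= 2, are circuits: a k-CNOT with a free line
   is a commutator of smaller ones, a commutator of two multi-controlled
   gates is a 3-cycle, the gates map any three distinct points to
   (0, e_t, e_w), so every 3-cycle is a conjugate of that one, and products of
   two transpositions are products of 3-cycles. *)

Lemma forall_in_set1 (T : finType) (P : pred T) (i : T) :
  [forall c in [set i], P c] = P i.
Proof. by apply/forall_inP/idP => [/(_ i (set11 i)) | Pi c /set1P->]. Qed.

Lemma forall_in_setU (T : finType) (P : pred T) (A B : {set T}) :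
  [forall c in A :|: B, P c] = [forall c in A, P c] && [forall c in B, P c].
Proof.
apply/forall_inP/andP => [PAB | [/forall_inP PA /forall_inP PB] c].
  by split; apply/forall_inP => c cX; apply: PAB; rewrite inE cX ?orbT.
by rewrite inE => /orP[/PA | /PB].
Qed.

Section Gates.

Variable m : nat.
Local Notation vec := (bvec m).
Implicit Types (C J K : {set 'I_m}) (x y : vec).

Local Open Scope group_scope.

(* Controls inside the target set are ignored, so that [cnot C J] is an
   involution for all [C] and [J]. *)
Definition cnot_fun C J x : vec :=
  [ffun i => x i (+) ((i \in J) && [forall c in C :\: J, x c])].

Lemma cnot_funK C J : involutive (cnot_fun C J).
Proof.
move=> x; have ctrl : [forall c in C :\: J, cnot_fun C J x c] = [forall c in C :\: J, x c].
  apply: eq_forallb_in => c; rewrite !inE => /andP[/negbTE cJ _].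
  by rewrite ffunE cJ addbF.
by apply/ffunP => i; rewrite !ffunE ctrl -addbA addbb addbF.
Qed.

Definition cnot C J : {perm vec} := perm (inv_inj (cnot_funK C J)).

Definition zero_vec : vec := [ffun=> false].

Definition unit_vec k : vec := [ffun i => i == k].

Lemma cnotE C J x : [disjoint C & J] ->
  cnot C J x = [ffun i => x i (+) ((i \in J) && [forall c in C, x c])].
Proof. by move=> /setDidPl dCJ; rewrite permE /cnot_fun dCJ. Qed.

Lemma cnot1E C t x i : t \notin C ->
  cnot C [set t] x i = if i == t then x i (+) [forall c in C, x c] else x i.
Proof.
move=> tC; rewrite cnotE 1?disjoint_sym ?disjoints1 // ffunE inE.
by case: eqP; rewrite ?addbF.
Qed.

Lemma cnot_id C J x : ~~ [forall c in C :\: J, x c] -> cnot C J x = x.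
Proof. by move=> /negbTE off; apply/ffunP => i; rewrite permE ffunE off andbF addbF. Qed.

Lemma cnot_ctrl C J (D : {set 'I_m}) x : [disjoint D & J] ->
  [forall c in D, cnot C J x c] = [forall c in D, x c].
Proof.
move=> dDJ; apply: eq_forallb_in => c cD.
by rewrite permE ffunE (disjointFr dDJ cD) addbF.
Qed.

Lemma cnotV C J : (cnot C J)^-1 = cnot C J.
Proof.
apply/eqP; rewrite eq_invg_mul; apply/eqP/permP => x.
by rewrite permM perm1 !permE cnot_funK.
Qed.

Lemma cnot0 C : cnot C set0 = 1.
Proof. by apply/permP => x; apply/ffunP => i; rewrite permE perm1 !ffunE in_set0 addbF. Qed.

Lemma cnotU C J1 J2 : [disjoint J1 & J2] -> [disjoint C & J1 :|: J2] ->
  cnot C (J1 :|: J2) = cnot C J1 * cnot C J2.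
Proof.
move=> dJ dC; have dC1 := disjointWr (subsetUl J1 J2) dC.
have dC2 := disjointWr (subsetUr J1 J2) dC.
apply/permP => x; rewrite permM [RHS]cnotE // [LHS]cnotE // cnot_ctrl //.
apply/ffunP => i; rewrite !ffunE cnotE // ffunE inE -addbA; congr addb.
by have [iJ1 | //] := boolP (i \in J1); rewrite (disjointFr dJ iJ1) addbF.
Qed.

Definition elementary_gates : {set {perm vec}} :=
  [set cnot g.1 [set g.2] | g : gate m & (g.2 \notin g.1) && (#|g.1| <= 2)].

Lemma gate_funE (g : gate m) : gate_ok g -> gate_fun g =1 cnot g.1 [set g.2].
Proof.
move=> ok x; rewrite cnotE 1?disjoint_sym ?disjoints1 //.
by apply/ffunP => i; rewrite !ffunE inE; case: eqP; rewrite ?addbF.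
Qed.

Lemma elementary_circuit s : s \in <<elementary_gates>> ->
  exists c : seq (gate m),
    (forall g, g \in c -> gate_ok g /\ #|g.1| <= 2) /\ forall x, circuit_fun c x = s x.
Proof.
case/gen_prodgP=> n [gs gs_gates ->{s}].
elim: n gs gs_gates => [|n IHn] gs gs_gates.
  by exists [::]; split=> // x; rewrite big_ord0 perm1.
have [c [c_ok c_gs]] := IHn _ (fun i => gs_gates (widen_ord (leqnSn n) i)).
have /imsetP[g] := gs_gates ord_max; rewrite inE => /andP[g_ok g_small] gs_max.
exists (rcons c g); split=> [g' | x].
  by rewrite mem_rcons inE => /predU1P[-> | /c_ok].
rewrite big_ord_recr permM /circuit_fun foldl_rcons -/(circuit_fun c x).
by rewrite c_gs gs_max gate_funE.
Qed.

Lemma cnot_elementary C t : t \notin C -> #|C| <= 2 ->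
  cnot C [set t] \in <<elementary_gates>>.
Proof. by move=> tC smallC; apply/mem_gen/imsetP; exists (C, t); rewrite // inE tC. Qed.

Lemma cnot_fanout_elementary C J : [disjoint C & J] -> #|C| <= 2 ->
  cnot C J \in <<elementary_gates>>.
Proof.
move=> + smallC; elim: {J}_.+1 {-2}J (ltnSn #|J|) => // k IHk J ltJk dCJ.
have [-> | [j jJ]] := set_0Vmem J; first by rewrite cnot0 group1.
rewrite -(setD1K jJ) cnotU ?disjoints1 ?setD11 ?setD1K //.
rewrite groupM ?cnot_elementary ?(disjointFl dCJ jJ) ?IHk //.
  by rewrite (cardsD1 j J) jJ in ltJk.
by apply: disjointWr dCJ; apply: subsetDl.
Qed.

Lemma cnot_commg (S : {set 'I_m}) s v t :
  v \notin S -> t \notin S -> s != v -> s != t -> v != t ->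
  [~ cnot S [set v], cnot [set s; v] [set t]] = cnot (s |: S) [set t].
Proof.
move=> vS tS sv st vt.
have tsv : t \notin [set s; v] by rewrite !inE negb_or eq_sym st eq_sym vt.
have tsS : t \notin s |: S by rewrite !inE negb_or eq_sym st.
have dSv : [disjoint S & [set v]] by rewrite disjoint_sym disjoints1.
have dSt : [disjoint S & [set t]] by rewrite disjoint_sym disjoints1.
apply/permP => x; rewrite commgEl conjgE !cnotV !mulgA !permM.
set x1 := cnot S _ x; set x2 := cnot _ _ x1; set x3 := cnot S _ x2.
have ctrlS : [forall c in S, x2 c] = [forall c in S, x c] by rewrite !cnot_ctrl.
have x3_other i : i != t -> x3 i = x i.
  move=> it; rewrite !cnot1E // (negbTE it) ctrlS.
  by case: eqP => [-> | _]; rewrite ?eqxx -?addbA ?addbb ?addbF.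
have x3t : x3 t = x t (+) (x s && (x v (+) [forall c in S, x c])).
  rewrite !cnot1E // eq_sym (negbTE vt) eqxx forall_in_setU !forall_in_set1.
  by rewrite !cnot1E // (negbTE sv) eqxx.
apply/ffunP => i; rewrite [LHS]cnot1E // [RHS]cnot1E // forall_in_setU !forall_in_set1.
rewrite (x3_other s) // (x3_other v) //.
case: eqP => [-> | /eqP it]; last exact: x3_other.
rewrite x3t forall_in_setU forall_in_set1 -addbA; congr addb.
by case: (x s); case: (x v); case: [forall c in S, x c].
Qed.

(* A line outside [t |: C] is borrowed as the target of a gate with one
   control less. *)
Lemma mcnot_elementary C t : t \notin C -> (#|C| <= 2) || (#|C|.+2 <= m) ->
  cnot C [set t] \in <<elementary_gates>>.
Proof.
elim: {C}_.+1 {-2}C (ltnSn #|C|) t => // k IHk C ltCk t tC.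
have [smallC _ | bigC /= roomC] := leqP #|C| 2; first exact: cnot_elementary.
have [s sC] : exists s, s \in C.
  by apply/set0Pn; rewrite -card_gt0; apply: leq_trans bigC.
have [v _ vtC] : exists2 v, v \in [set: 'I_m] & v \notin t |: C.
  apply/subsetPn/negP => /subset_leq_card; rewrite cardsT card_ord cardsU1 tC /=.
  by move: roomC; lia.
move: vtC; rewrite !inE negb_or => /andP[vt vC].
have cardS : #|C| = #|C :\ s|.+1 by rewrite (cardsD1 s C) sC.
have sv : s != v by apply: contraNneq vC => <-.
have st : s != t by apply: contraNneq tC => <-.
rewrite -(setD1K sC) -(@cnot_commg _ s v) ?inE ?(negbTE vC) ?(negbTE tC) ?andbF //.
apply: groupR; last first.
  apply: cnot_elementary; last by rewrite cards2; case: (s != v).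
  by rewrite !inE negb_or eq_sym st eq_sym vt.
by apply: IHk; rewrite ?inE ?(negbTE vC) ?andbF //;
  move: ltCk roomC; rewrite cardS; lia.
Qed.

Lemma unit_vec_elementary K k (v : vec) : k \notin K -> (exists2 i, i \notin K & v i) ->
  exists2 g, g \in <<elementary_gates>> &
    g v = unit_vec k /\ forall y, (forall i, y i -> i \in K) -> g y = y.
Proof.
move=> kK [i iK vi].
have [g1 g1R [g1v g1K]] : exists2 g1, g1 \in <<elementary_gates>> &
    g1 v k /\ forall y, (forall i, y i -> i \in K) -> g1 y = y.
  have [vk | vk] := boolP (v k).
    by exists 1; rewrite ?group1 // perm1; split=> // y; rewrite perm1.
  have ik : i != k by apply: contraNneq vk => <-.
  exists (cnot [set i] [set k]); first by rewrite cnot_elementary ?cards1 ?inE 1?eq_sym.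
  split; first by rewrite cnot1E ?inE 1?eq_sym // eqxx forall_in_set1 vi (negbTE vk).
  have dik : [disjoint [set i] & [set k]] by rewrite disjoints1 inE.
  move=> y yK; apply: cnot_id; rewrite (setDidPl dik) forall_in_set1.
  by apply: contra iK => /yK.
pose J := [set j | (j != k) && g1 v j].
have dkJ : [disjoint [set k] & J] by rewrite disjoints1 !inE eqxx.
exists (g1 * cnot [set k] J); first by rewrite groupM ?cnot_fanout_elementary ?cards1.
split=> [|y yK]; last first.
  rewrite permM g1K // cnot_id // (setDidPl dkJ) forall_in_set1.
  by apply: contra kK => /yK.
apply/ffunP => j; rewrite permM cnotE // !ffunE forall_in_set1 g1v andbT inE.
by have [-> | jk] := j =P k; rewrite ?g1v // addbb.
Qed.

Lemma zero_vec_supp K i : zero_vec i -> i \in K.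
Proof. by rewrite ffunE. Qed.

Section TwoLines.

Variables t w : 'I_m.
Hypothesis tw : t != w.

Lemma pair_normal (a b : vec) : a != b ->
  exists2 g, g \in <<elementary_gates>> & g a = zero_vec /\ g b = unit_vec t.
Proof.
move=> ab; pose g0 := cnot set0 [set i | a i].
have d0 : [disjoint set0 & [set i | a i]] by rewrite -setI_eq0 set0I.
have g0a : g0 a = zero_vec.
  rewrite cnotE //; apply/ffunP => i; rewrite !ffunE inE.
  have -> : [forall j in set0, a j] by apply/forall_inP => j; rewrite inE.
  by rewrite andbT addbb.
have [i g0bi] : exists i, g0 b i.
  case: (pickP (g0 b)) => [i g0bi | none]; first by exists i.
  suff : g0 b = g0 a by move/perm_inj/eqP; rewrite eq_sym (negbTE ab).
  by rewrite g0a; apply/ffunP => i; rewrite ffunE none.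
have [||g1 g1R [g1b g1K]] := @unit_vec_elementary set0 t (g0 b); rewrite ?inE //.
  by exists i; rewrite ?inE.
exists (g0 * g1); first by rewrite groupM ?cnot_fanout_elementary ?cards0.
by rewrite !permM g0a g1b g1K //; apply: zero_vec_supp.
Qed.

Lemma triple_normal (a b c : vec) : a != b -> a != c -> b != c ->
  exists2 g, g \in <<elementary_gates>> &
    [/\ g a = zero_vec, g b = unit_vec t & g c = unit_vec w].
Proof.
move=> ab ac bc; have [g1 g1R [g1a g1b]] := pair_normal ab.
have [j jt g1cj] : exists2 j, j \notin [set t] & g1 c j.
  case: (pickP [pred j | (j \notin [set t]) && g1 c j]) => [j /andP[] | none].
    by exists j.
  have g1c_off j : j != t -> g1 c j = false by move=> jt; have := none j; rewrite !inE jt.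
  have [g1ct | g1ct] := boolP (g1 c t).
    suff : g1 c = g1 b by move/perm_inj/eqP; rewrite eq_sym (negbTE bc).
    by rewrite g1b; apply/ffunP => j; rewrite ffunE; have [-> // | /eqP/g1c_off] := j =P t.
  suff : g1 c = g1 a by move/perm_inj/eqP; rewrite eq_sym (negbTE ac).
  rewrite g1a; apply/ffunP => j; rewrite ffunE.
  by have [-> | /eqP/g1c_off //] := j =P t; apply: negbTE.
have wt : w \notin [set t] by rewrite inE eq_sym tw.
have [g2 g2R [g2c g2K]] := unit_vec_elementary wt (ex_intro2 _ _ j jt g1cj).
exists (g1 * g2); first by rewrite groupM.
rewrite !permM g1a g1b g2c g2K; last exact: zero_vec_supp.
by rewrite g2K // => i; rewrite ffunE inE.
Qed.

Definition upd2 x (a b : bool) : vec :=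
  [ffun i => if i == t then a else if i == w then b else x i].

Definition corner a b := upd2 [ffun=> true] a b.

Lemma upd2_id x : upd2 x (x t) (x w) = x.
Proof.
apply/ffunP => i; rewrite ffunE.
by case: (i =P t) => [-> | _] //; case: (i =P w) => [-> | _].
Qed.

Lemma upd2_inj x a b a' b' : (upd2 x a b == upd2 x a' b') = (a == a') && (b == b').
Proof.
apply/eqP/andP => [eq_ab | [/eqP-> /eqP->] //].
have := congr1 (fun y : vec => (y t, y w)) eq_ab.
by rewrite /= !ffunE eqxx eq_sym (negbTE tw) eqxx => -[-> ->].
Qed.

Lemma upd2_ctrl (P : {set 'I_m}) x a b : t \notin P -> w \notin P ->
  [forall c in P, upd2 x a b c] = [forall c in P, x c].
Proof.
move=> tP wP; apply: eq_forallb_in => c cP; rewrite ffunE.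
have [ct | _] := c =P t; first by rewrite -ct cP in tP.
by have [cw | //] := c =P w; rewrite -cw cP in wP.
Qed.

Lemma cnot_upd2_t (P : {set 'I_m}) x a b : t \notin P -> w \notin P ->
  cnot (w |: P) [set t] (upd2 x a b) = upd2 x (a (+) (b && [forall c in P, x c])) b.
Proof.
move=> tP wP; apply/ffunP => i; rewrite cnot1E; last by rewrite !inE negb_or tw.
rewrite forall_in_setU forall_in_set1 upd2_ctrl // !ffunE (eq_sym w t) (negbTE tw) eqxx.
by case: (i =P t).
Qed.

Lemma cnot_upd2_w (Q : {set 'I_m}) x a b : t \notin Q -> w \notin Q ->
  cnot (t |: Q) [set w] (upd2 x a b) = upd2 x a (b (+) (a && [forall c in Q, x c])).
Proof.
move=> tQ wQ; apply/ffunP => i; rewrite cnot1E; last by rewrite !inE negb_or eq_sym tw.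
rewrite forall_in_setU forall_in_set1 upd2_ctrl // !ffunE eqxx.
by case: (i =P w) => [-> | //]; rewrite eq_sym (negbTE tw).
Qed.

(* On the points that are 1 outside t and w, the two gates act on (x_t, x_w)
   as the transvections (a, b) |-> (a + b, b) and (a, b) |-> (a, b + a), whose
   commutator is a 3-cycle of the nonzero pairs; elsewhere one of them is the
   identity and the commutator is trivial. *)
Lemma cnot_commg_cycle (P Q : {set 'I_m}) : P :|: Q = ~: [set t; w] ->
  [~ cnot (w |: P) [set t], cnot (t |: Q) [set w]] =
  tperm (corner false true) (corner true false) * tperm (corner true false) (corner true true).
Proof.
move=> PQ; have outPQ c : c \in P :|: Q -> (c != t) && (c != w).
  by rewrite PQ !inE negb_or.
have [tP wP] : t \notin P /\ w \notin P.
  by split; apply/negP => /(subsetP (subsetUl P Q))/outPQ; rewrite eqxx ?andbF.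
have [tQ wQ] : t \notin Q /\ w \notin Q.
  by split; apply/negP => /(subsetP (subsetUr P Q))/outPQ; rewrite eqxx ?andbF.
apply/permP => y; rewrite -[y]upd2_id; move: (y t) (y w) => a b.
rewrite commgEl conjgE !cnotV !mulgA !permM !(cnot_upd2_t, cnot_upd2_w) //.
have [/andP[yP yQ] | off] := boolP ([forall c in P, y c] && [forall c in Q, y c]).
  have corner_y a' b' : upd2 y a' b' = corner a' b'.
    apply/ffunP => i; rewrite !ffunE.
    have [// | it] := i =P t; have [// | iw] := i =P w.
    have : i \in P :|: Q by rewrite PQ !inE negb_or; apply/andP; split; apply/eqP.
    by rewrite inE => /orP[/(forall_inP yP) | /(forall_inP yQ)].
  rewrite yP yQ !corner_y.
  by case: a; case: b; rewrite !permE /= /corner !upd2_inj.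
have corner_off a' b' : corner a' b' != upd2 y a b.
  apply: contra off => /eqP eq_y; rewrite -forall_in_setU.
  apply/forall_inP => c /outPQ/andP[ct cw].
  by have := congr1 (fun z : vec => z c) eq_y; rewrite !ffunE (negbTE ct) (negbTE cw) => <-.
rewrite !tpermD //; move: off; rewrite negb_and.
by case/orP=> /negbTE->; rewrite ?andbF ?addbF -?addbA ?addbb ?addbF.
Qed.

Lemma corner_cycle_elementary :
  tperm (corner false true) (corner true false) * tperm (corner true false) (corner true true)
    \in <<elementary_gates>>.
Proof.
have wt : w != t by rewrite eq_sym.
have [rest0 | [r r_rest]] := set_0Vmem (~: [set t; w]).
  rewrite -(@cnot_commg_cycle set0 set0) ?setU0 //.
  by rewrite groupR // cnot_elementary ?cards1 ?inE.
have card_rest : #|~: [set t; w]|.+2 = m.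
  by have := cardsC [set t; w]; rewrite cards2 tw card_ord.
move: (r_rest); rewrite !inE negb_or => /andP[rt rw].
rewrite -(@cnot_commg_cycle (~: [set t; w] :\ r) [set r]) ?(setUC _ [set r]) ?setD1K //.
apply: groupR; last first.
  apply: cnot_elementary; last by rewrite cards2; case: (r != t).
  by rewrite !inE negb_or wt eq_sym rw.
apply: mcnot_elementary; first by rewrite !inE !negb_or tw !negb_and eqxx orbT.
have wR : w \notin ~: [set t; w] :\ r by rewrite !inE eqxx orbT andbF.
apply/orP; right; rewrite cardsU1 wR.
by move: card_rest; rewrite (cardsD1 r (~: _)) r_rest => /eqP; rewrite eqn_leq => /andP[].
Qed.

Lemma cycle3_elementary (a b c : vec) : a != b -> b != c ->
  tperm a b * tperm b c \in <<elementary_gates>>.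
Proof.
move=> ab bc; have [<- | ac] := eqVneq a c; first by rewrite (tpermC b) tperm2 group1.
have [g gR [ga gb gc]] := triple_normal ab ac bc.
have [g' g'R [g'a g'b g'c]] :
    exists2 g', g' \in <<elementary_gates>> &
      [/\ g' (corner false true) = zero_vec, g' (corner true false) = unit_vec t
         & g' (corner true true) = unit_vec w].
  by apply: triple_normal; rewrite /corner upd2_inj.
suff -> : tperm a b * tperm b c =
    (tperm (corner false true) (corner true false) * tperm (corner true false) (corner true true))
      ^ (g' * g^-1) by rewrite groupJ ?corner_cycle_elementary // groupM ?groupV.
by rewrite conjMg !tpermJ !permM g'a g'b g'c -ga -gb -gc !permK.
Qed.

End TwoLines.

Lemma even_perm_elementary s : 1 < m -> ~~ odd_perm s -> s \in <<elementary_gates>>.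
Proof.
move=> m_gt1; have tw : Ordinal (ltnW m_gt1) != Ordinal m_gt1 by [].
have tperm2_elementary (x y u v : vec) : x != y -> u != v ->
    tperm x y * tperm u v \in <<elementary_gates>>.
  move=> xy uv; have [eq_yu | yu] := eqVneq y u.
    by rewrite -eq_yu in uv *; apply: (cycle3_elementary tw).
  rewrite -[tperm x y]mulg1 -(tperm2 y u) mulgA -[_ * tperm u v]mulgA.
  by apply: groupM; apply: (cycle3_elementary tw).
have [ts -> dts] := prod_tpermP s; rewrite odd_perm_prod //.
suff [] : (~~ odd (size ts) -> \prod_(t <- ts) tperm t.1 t.2 \in <<elementary_gates>>) /\
    (odd (size ts) -> forall x y : vec, x != y ->
       tperm x y * \prod_(t <- ts) tperm t.1 t.2 \in <<elementary_gates>>) by [].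
elim: ts dts => [|[x y] ts IHts] /=.
  by rewrite big_nil; split=> // _; apply: group1.
case/andP=> /= xy /IHts[IHeven IHodd]; rewrite big_cons negbK.
split=> [/IHodd/(_ x y xy) // | even_ts u v uv].
by rewrite mulgA; apply: groupM; [apply: tperm2_elementary | apply: IHeven].
Qed.

End Gates.

Lemma perm_extend (X T : finType) (f g : X -> T) : injective f -> injective g ->
  exists2 h : {perm T}, perm_on (f @: setT :|: g @: setT) h & forall x, h (f x) = g x.
Proof.
move=> f_inj g_inj; set S := _ :|: _.
have fS x : f x \in S by rewrite !inE imset_f ?inE.
have gS x : g x \in S by rewrite inE orbC imset_f ?inE.
suff [h hS hfg] : exists2 h : {perm T}, perm_on S h & {in enum X, forall x, h (f x) = g x}.
  by exists h => // x; rewrite hfg ?mem_enum.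
elim: (enum X) => [|x s [h hS hfg]]; first by exists 1%g; rewrite ?perm_on1.
exists (h * tperm (h (f x)) (g x))%g.
  have hfxS : h (f x) \in S by rewrite (perm_closed _ hS).
  apply: perm_onM hS _; apply: subset_trans (tperm_on _ _) _.
  by apply/subsetP => z; rewrite in_set2 => /orP[] /eqP->.
move=> y; rewrite inE; have [-> _ | yx /= ys] := eqVneq y x.
  by rewrite permM tpermL.
have hfx_gy : h (f x) != g y by rewrite -(hfg y ys) (inj_eq perm_inj) (inj_eq f_inj) eq_sym.
by rewrite permM (hfg y ys) tpermD // (inj_eq g_inj) eq_sym.
Qed.

Lemma fibre_label (X Y Z : finType) (f : X -> Y) :
  (forall y, #|[set x | f x == y]| <= #|Z|) ->
  exists a : X -> Z, injective (fun x => (f x, a x)).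
Proof.
move=> small_fibres; pose fibre x := enum [set x' | f x' == f x].
have lt_index x : index x (fibre x) < #|Z|.
  by apply: leq_trans (small_fibres (f x)); rewrite cardE index_mem mem_enum inE.
exists (fun x => enum_val (Ordinal (lt_index x))) => x1 x2 [f12 /enum_val_inj[]].
have x1_fibre : x1 \in fibre x2 by rewrite mem_enum inE f12.
rewrite /fibre f12 => index12.
by rewrite -(nth_index x1 x1_fibre) index12 nth_index // mem_enum inE.
Qed.

Lemma card_support_le (T : finType) (D : {set T}) (h : {perm T}) :
  perm_on D h -> #|[set z | h z != z]| <= #|D|.
Proof. by move=> hD; apply/subset_leq_card/subsetP => z; rewrite inE => /(subsetP hD). Qed.

Lemma card_bvec k : #|{: bvec k}| = 2 ^ k.
Proof. by rewrite card_ffun card_bool card_ord. Qed.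

Section Ancillas.

Variables n q : nat.

Definition join (y : bvec n) (a : bvec q) : bvec (n + q) :=
  [ffun i => match split i with inl j => y j | inr k => a k end].

Lemma psi_join y a : psi n q (join y a) = y.
Proof. by apply/ffunP => j; rewrite !ffunE (unsplitK (inl _ j)). Qed.

Lemma join_inj y a y' a' : join y a = join y' a' -> (y, a) = (y', a').
Proof.
move=> eq_join; congr pair; first by rewrite -(psi_join y a) eq_join psi_join.
apply/ffunP => k; have := congr1 (fun z : bvec (n + q) => z (rshift n k)) eq_join.
by rewrite !ffunE (unsplitK (inr _ k)).
Qed.

Lemma phi_join x : phi n q x = join x [ffun=> false].
Proof. by apply/ffunP => i; rewrite !ffunE; case: split => // k; rewrite ffunE. Qed.

Lemma phi_inj : injective (phi n q).
Proof. by move=> x1 x2; rewrite !phi_join => /join_inj[]. Qed.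

End Ancillas.

Lemma even_ancilla_perm n q (f : bvec n -> bvec n) : 1 <= n -> 0 < q <= n ->
  (forall y, #|[set x | f x == y]| <= 2 ^ q) ->
  exists h : {perm bvec (n + q)}, [/\ ~~ odd_perm h, #|[set z | h z != z]| <= 2 ^ n.+1
    & forall x, psi n q (h (phi n q x)) = f x].
Proof.
move=> n_gt0 /andP[q_gt0 q_le_n] small_fibres.
have [a fa_inj] : exists a : bvec n -> bvec q, injective (fun x => (f x, a x)).
  by apply: fibre_label => y; rewrite card_bvec.
pose g x := join (f x) (a x).
have psi_g x : psi n q (g x) = f x by rewrite psi_join.
have g_inj : injective g by move=> x1 x2 /join_inj/fa_inj.
have [h0 h0S h0g] := perm_extend (@phi_inj n q) g_inj.
set A := _ @: _ in h0S; set B := _ @: _ in h0S.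
have card_img (h : bvec n -> bvec (n + q)) : #|h @: setT| <= 2 ^ n.
  by apply: leq_trans (leq_imset_card _ _) _; rewrite cardsT card_bvec.
have card_AB : #|A :|: B| = #|A :\: B| + #|B|.
  by rewrite cardsU cardsD; have := subset_leq_card (subsetIl A B); lia.
have card_S : #|A :|: B| <= 2 ^ n.+1.
  rewrite card_AB expnS mul2n -addnn; apply: leq_add; last exact: card_img.
  by apply: leq_trans (subset_leq_card (subsetDl A B)) _; apply: card_img.
have [odd_h0 | even_h0] := boolP (odd_perm h0); last first.
  exists h0; split=> // [|x]; last by rewrite h0g psi_g.
  exact: leq_trans (card_support_le h0S) card_S.
suff [u [v [uv psi_uv card_uv]]] : exists u v, [/\ u != v,
    forall x, psi n q (tperm u v (g x)) = f x
  & #|[set z | (h0 * tperm u v)%g z != z]| <= 2 ^ n.+1].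
  exists (h0 * tperm u v)%g; split=> // [|x]; last by rewrite permM h0g.
  by rewrite odd_permM odd_tperm uv odd_h0.
have [two_AB | small_AB] := ltnP 1 #|A :\: B|.
  have [u [v [uAB vAB uv]]] := card_gt1P two_AB.
  have notB z : z \in A :\: B -> forall x, z != g x.
    by move=> zAB x; apply: contraTneq zAB => ->; rewrite inE imset_f ?inE.
  exists u, v; split=> // [x | ]; first by rewrite tpermD ?notB.
  apply: leq_trans (card_support_le (perm_onM h0S _)) card_S.
  apply: subset_trans (tperm_on u v) (subset_trans _ (subsetUl A B)).
  by apply/subsetP => z /set2P[] ->; apply: (subsetP (subsetDl A B)).
pose u : bvec (n + q) := join [ffun=> false] [ffun=> false].
pose v : bvec (n + q) := join [ffun=> false] [ffun=> true].
exists u, v; split.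
- apply/eqP => /join_inj[] /(congr1 (fun a : bvec q => a (Ordinal q_gt0))).
  by rewrite !ffunE.
- by move=> x; rewrite -psi_g; case: tpermP => [-> | -> | //]; rewrite !psi_join.
have uvS : perm_on (A :|: B :|: [set u; v]) (h0 * tperm u v)%g.
  apply: perm_onM; first exact: subset_trans h0S (subsetUl _ _).
  exact: subset_trans (tperm_on u v) (subsetUr _ _).
apply: leq_trans (card_support_le uvS) _.
have [n_gt1 | n_le1] := ltnP 1 n.
  have cardB : #|B| <= 2 ^ n := card_img g.
  have four : 4 <= 2 ^ n by rewrite -[4]/(2 ^ 2) leq_exp2l.
  have := cardsU (A :|: B) [set u; v]; rewrite cards2 expnS.
  by case: (u != v); lia.
(* n = q = 1: the whole space has 2 ^ n.+1 points. *)
by apply: leq_trans (max_card _) _; rewrite card_bvec leq_exp2l //; lia.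
Qed.

Theorem mainTheorem2 (n q : nat) (f : bvec n -> bvec n) :
  1 <= n -> 0 < q <= n ->
  (forall y : bvec n, #|[set x | f x == y]| <= 2 ^ q) ->
  (exists h : {perm bvec (n + q)},
      ~~ odd_perm h /\
      #|[set z | h z != z]| <= 2 ^ n.+1 /\
      (forall x : bvec n, psi n q (h (phi n q x)) = f x))
  /\ F n q f.
Proof.
move=> n_gt0 q_range small_fibres.
have [h [even_h small_h h_f]] := even_ancilla_perm n_gt0 q_range small_fibres.
split; first by exists h.
have two_lines : 1 < n + q by case/andP: q_range; lia.
have [c [c_ok c_h]] := elementary_circuit (even_perm_elementary two_lines even_h).
by exists c; split=> // x; rewrite c_h.
Qed.
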